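(* Let $A\in M_n(\mathbb{C})$ be a generalized row stochastic matrix with constant row sum $c\in\mathbb{C}$, i.e. $\sum_{j=1}^n A_{ij}=c$ for all $i=1,\dots,n$, and let $\sigma=\|A\|_2$. Then: (1) $|c|\le\sigma$. (2) If $|c|=\sigma$, then $A$ also has constant column sum $c$, i.e. $\sum_{i=1}^n A_{ij}=c$ for all $j=1,\dots,n$ (so $A$ is a $c$-generalized doubly stochastic matrix). (3) If $|c|=\sigma$, then $\mu_{\mathbb{B}}(A^m)=\sigma^m$ for every $m\in\mathbb{N}$ and every block structure $\mathbb{B}\subseteq M_n(\mathbb{C})$.
   Context: $\|M\|_2$ denotes the spectral norm (largest singular value) of $M\in M_n(\mathbb{C})$. A block structure is a set of the form $\mathbb{B}=\{\operatorname{diag}(\delta_1I_{k_1},\dots,\delta_rI_{k_r},\Delta_1,\dots,\Delta_s)\mid \delta_i\in\mathbb{C},\ \Delta_j\in M_{n_j}(\mathbb{C})\}\subseteq M_n(\mathbb{C})$ for some $r,s\in\mathbb{N}_0$ and positive integers $k_i,n_j$ with $\sum_{i=1}^r k_i+\sum_{j=1}^s n_j=n$. The structured singular value $\mu_{\mathbb{B}}:M_n(\mathbb{C})\to[0,\infty)$ is defined by $\mu_{\mathbb{B}}(M)=0$ if $\det(I+M\Delta)\neq0$ for all $\Delta\in\mathbb{B}$, and otherwise $\mu_{\mathbb{B}}(M)=\big(\min\{\|\Delta\|_2\mid \Delta\in\mathbb{B},\ \det(I+M\Delta)=0\}\big)^{-1}$. A $c$-generalized doubly stochastic matrix is a square complex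 matrix all of whose row sums and all of whose column sums equal $c$. *)

From HB Require Import structures.
From mathcomp Require Import all_boot all_order all_algebra.
From mathcomp Require Import complex.
From mathcomp Require Import boolp classical_sets reals.
Set Implicit Arguments. Unset Strict Implicit. Unset Printing Implicit Defensive.
Import Order.TTheory GRing.Theory Num.Theory.
Local Open Scope ring_scope.
Local Open Scope classical_set_scope.

Section Defs.
Variable R : realType.
Local Notation C := R[i].

Definition cabs (z : C) : R := Num.sqrt (complex.Re z ^+ 2 + complex.Im z ^+ 2).

Definition vnorm n (x : 'cV[C]_n) : R := Num.sqrt (\sum_(i < n) cabs (x i ord0) ^+ 2).

Definition specnorm n (M : 'M[C]_n) : R :=
  sup [set vnorm (M *m x) | x in [set x : 'cV[C]_n | vnorm x = 1]].

(* A block structure with r repeated-scalar blocks of sizes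
   ks = [k_1;..;k_r] followed by s full blocks of sizes ns = [n_1;..;n_s]. The
   b-th block (b counted in ks ++ ns) occupies the indices
   [sumn (take b sz), sumn (take b.+1 sz)). *)
Definition is_block_structure (n : nat) (ks ns : seq nat) : Prop :=
  all (fun k => 0 < k)%N (ks ++ ns) /\ sumn (ks ++ ns) = n.

Definition in_blk (sz : seq nat) (b p : nat) : bool :=
  (sumn (take b sz) <= p < sumn (take b.+1 sz))%N.

(* the set B = { diag(delta_1 I_{k_1},..,delta_r I_{k_r}, Delta_1,..,Delta_s) } *)
Definition block_set n (ks ns : seq nat) : set 'M[C]_n :=
  [set D | (forall i j : 'I_n, D i j != 0 ->
              exists2 b, (b < size (ks ++ ns))%N &
                in_blk (ks ++ ns) b i && in_blk (ks ++ ns) b j)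
         /\ (forall b, (b < size ks)%N -> forall i j : 'I_n,
              in_blk (ks ++ ns) b i -> in_blk (ks ++ ns) b j ->
              D i j = (if i == j then D j j else 0) /\ D i i = D j j)].

Definition ssv n (B : set 'M[C]_n) (M : 'M[C]_n) : R :=
  let S := [set D | B D /\ \det (1%:M + M *m D) = 0] in
  if `[< S !=set0 >] then (inf (@specnorm n @` S))^-1 else 0.

End Defs.

From HB Require Import structures.
From mathcomp Require Import all_boot all_order all_algebra.
From mathcomp Require Import complex.
From mathcomp Require Import boolp classical_sets reals.
From mathcomp Require Import ring lra zify.
Set Implicit Arguments. Unset Strict Implicit. Unset Printing Implicit Defensive.
Import Order.TTheory GRing.Theory Num.Theory.

(* The all-ones vector 1 satisfies A 1 = c 1, so |c| <= ||A||_2.  If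
   |c| = ||A||_2, then 1 attains the operator norm, so the gap
   |c|^2 ||x||^2 - ||A x||^2 is nonnegative for every x.  Along
   x = 1 + t p^* e_j with t real and p = c^* (c - sum_i A_ij), the gap is a
   quadratic in t with linear coefficient 2 |p|^2, hence p = 0 and the j-th
   column sum is c.  For mu_B(A^m): det(I + A^m D) = 0 forces
   ||A^m||_2 ||D||_2 >= 1, while the scalar matrix D = -c^-m I, which lies in
   every block structure, makes I + A^m D singular with
   ||D||_2 = |c|^-m = ||A^m||_2^-1. *)

(* ring_scope comes last so that [^*] is [Num.conj], not [conjc]. *)
Local Open Scope complex_scope.
Local Open Scope ring_scope.

Lemma det0_colP (F : fieldType) n (A : 'M[F]_n) :
  reflect (exists2 x : 'cV_n, x != 0 & A *m x = 0) (\det A == 0).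
Proof.
rewrite -det_tr; apply: (iffP det0P) => -[x x_neq0 Ax0].
  by exists x^T; rewrite ?trmx_eq0 // -[A]trmxK -trmx_mul Ax0 trmx0.
by exists x^T; rewrite ?trmx_eq0 // -trmx_mul Ax0 trmx0.
Qed.

Lemma mulmx_exp_eigen (F : comPzRingType) n p (M : 'M[F]_n) (v : 'M[F]_(n, p)) a m :
  M *m v = a *: v -> M ^+ m *m v = a ^+ m *: v.
Proof.
move=> Mv; elim: m => [|m IHm]; first by rewrite !expr0 mul1mx scale1r.
by rewrite exprS -mulmxE -mulmxA IHm -scalemxAr Mv scalerA -exprSr.
Qed.

Lemma in_blk_cover (sz : seq nat) (p : nat) : (p < sumn sz)%N ->
  exists2 b, (b < size sz)%N & in_blk sz b p.
Proof.
elim: sz p => [|k s IHs] p //= p_lt.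
have [p_lt_k|k_le_p] := ltnP p k.
  by exists 0%N => //; rewrite /in_blk /= take0 /= addn0 p_lt_k.
have [|b b_lt] := IHs (p - k)%N; first lia.
move=> b_in; exists b.+1 => //.
by move: b_in; rewrite /in_blk /= => /andP [? ?]; apply/andP; split; lia.
Qed.

Lemma block_set_scalar (R : realType) n (ks ns : seq nat) (a : R[i]) :
  is_block_structure n ks ns -> block_set ks ns (a%:M : 'M[R[i]]_n).
Proof.
move=> [_ sum_sz]; split=> [i j|b _ i j _ _]; last first.
  by rewrite !mxE !eqxx; split=> //; case: (i == j).
rewrite mxE; have [<- _|] := eqVneq i j; last by rewrite mulr0n eqxx.
have [|b b_lt i_in] := @in_blk_cover (ks ++ ns) i; first by rewrite sum_sz.
by exists b; rewrite ?i_in.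
Qed.

Lemma quadratic_ge0_eq0 (R : realType) (K r : R) :
  0 <= r -> (forall t, 0 <= t * (2 + t * K) * r) -> r = 0.
Proof.
move=> r_ge0 quad_ge0; apply/le_anti; rewrite r_ge0 andbT.
have a_gt0 : 0 < `|K| + 1 by rewrite ltr_pwDr ?normr_ge0.
have K_lt : K < `|K| + 1 by rewrite (le_lt_trans (ler_norm K)) // ltrDl.
set t := - (`|K| + 1)^-1.
have t_neg : t * (2 + t * K) < 0.
  have : (`|K| + 1)^-1 * K < 1.
    by rewrite ltr_pdivrMl // mulr1.
  have : 0 < (`|K| + 1)^-1 by rewrite invr_gt0.
  rewrite /t; nra.
by rewrite -(nmulr_rge0 _ t_neg) quad_ge0.
Qed.

Section ComplexModulus.
Variable R : realType.
Local Notation C := R[i].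
Implicit Types z w : C.

Lemma cabsE z : (cabs z)%:C = `|z|.
Proof. by rewrite normc_def. Qed.

Lemma cabs_ge0 z : 0 <= cabs z.
Proof. exact: sqrtr_ge0. Qed.

Lemma cabs_eq0 z : (cabs z == 0) = (z == 0).
Proof. by rewrite -[RHS]normr_eq0 -cabsE -(inj_eq (@complexI R)). Qed.

Lemma cabs0 : cabs (0 : C) = 0.
Proof. by apply/eqP; rewrite cabs_eq0. Qed.

Lemma cabs1 : cabs (1 : C) = 1.
Proof. by apply: (@complexI R); rewrite cabsE normr1. Qed.

Lemma cabsN z : cabs (- z) = cabs z.
Proof. by apply: (@complexI R); rewrite !cabsE normrN. Qed.

Lemma cabsM z w : cabs (z * w) = cabs z * cabs w.
Proof. by apply: (@complexI R); rewrite rmorphM /= !cabsE normrM. Qed.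

Lemma cabsV z : cabs z^-1 = (cabs z)^-1.
Proof. by apply: (@complexI R); rewrite fmorphV /= !cabsE normfV. Qed.

Lemma cabsX z m : cabs (z ^+ m) = cabs z ^+ m.
Proof. by apply: (@complexI R); rewrite rmorphXn /= !cabsE normrX. Qed.

Lemma cabsR (r : R) : cabs r%:C = `|r|.
Proof. by rewrite /cabs /= expr0n /= addr0 sqrtr_sqr. Qed.

Lemma cabs_sum (I : finType) (f : I -> C) :
  cabs (\sum_i f i) <= \sum_i cabs (f i).
Proof.
rewrite -lecR rmorph_sum /= (eq_bigr _ (fun i _ => cabsE (f i))) cabsE.
exact: ler_norm_sum.
Qed.

Lemma cabs_sqrC z : (cabs z ^+ 2)%:C = z * z^*.
Proof. by rewrite rmorphXn /= cabsE normCK. Qed.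

End ComplexModulus.

Section EuclideanNorm.
Variables (R : realType) (n : nat).
Local Notation C := R[i].
Implicit Types (x y : 'cV[C]_n) (a : C).

Definition dotc x y : C := \sum_(i < n) x i ord0 * (y i ord0)^*.

Lemma dotcC x y : dotc y x = (dotc x y)^*.
Proof.
by rewrite /dotc rmorph_sum; apply: eq_bigr => i _; rewrite rmorphM /= conjCK mulrC.
Qed.

Lemma dotcDl x x' y : dotc (x + x') y = dotc x y + dotc x' y.
Proof. by rewrite /dotc -big_split; apply: eq_bigr => i _; rewrite mxE mulrDl. Qed.

Lemma dotcZl a x y : dotc (a *: x) y = a * dotc x y.
Proof. by rewrite /dotc mulr_sumr; apply: eq_bigr => i _; rewrite mxE mulrA. Qed.

Lemma dotcDr x y y' : dotc x (y + y') = dotc x y + dotc x y'.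
Proof. by rewrite dotcC dotcDl rmorphD /= -!dotcC. Qed.

Lemma dotcZr a x y : dotc x (a *: y) = a^* * dotc x y.
Proof. by rewrite dotcC dotcZl rmorphM /= -dotcC. Qed.

Lemma dotc_deltal (j : 'I_n) y : dotc (delta_mx j ord0) y = (y j ord0)^*.
Proof.
rewrite /dotc (bigD1 j) //= big1 => [|i /negPf i_neq_j]; last by rewrite mxE i_neq_j mul0r.
by rewrite mxE !eqxx mul1r addr0.
Qed.

Lemma vnorm_ge0 x : 0 <= vnorm x.
Proof. exact: sqrtr_ge0. Qed.

Lemma vnorm_sqr x : vnorm x ^+ 2 = \sum_(i < n) cabs (x i ord0) ^+ 2.
Proof. by rewrite sqr_sqrtr // sumr_ge0 // => i _; exact: sqr_ge0. Qed.

Lemma vnorm_sqrC x : (vnorm x ^+ 2)%:C = dotc x x.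
Proof. by rewrite vnorm_sqr rmorph_sum; apply: eq_bigr => i _; exact: cabs_sqrC. Qed.

Lemma vnormZ a x : vnorm (a *: x) = cabs a * vnorm x.
Proof.
rewrite /vnorm -[cabs a]ger0_norm ?cabs_ge0 // -sqrtr_sqr -sqrtrM ?sqr_ge0 //.
by rewrite mulr_sumr; congr Num.sqrt; apply: eq_bigr => i _; rewrite mxE cabsM exprMn.
Qed.

Lemma vnormN x : vnorm (- x) = vnorm x.
Proof. by rewrite -scaleN1r vnormZ cabsN cabs1 mul1r. Qed.

Lemma vnorm_eq0 x : (vnorm x == 0) = (x == 0).
Proof.
apply/idP/eqP => [|->]; last first.
  by rewrite /vnorm big1 ?sqrtr0 // => i _; rewrite mxE cabs0 expr0n.
rewrite -sqrf_eq0 vnorm_sqr psumr_eq0 => [/allP x0|i _]; last exact: sqr_ge0.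
apply/matrixP => i k; rewrite ord1 mxE.
by apply/eqP; rewrite -cabs_eq0 -sqrf_eq0; apply: x0; rewrite mem_index_enum.
Qed.

Lemma vnorm0 : vnorm (0 : 'cV[C]_n) = 0.
Proof. by apply/eqP; rewrite vnorm_eq0. Qed.

Lemma vnorm_gt0 x : (0 < vnorm x) = (x != 0).
Proof. by rewrite lt_def vnorm_eq0 vnorm_ge0 andbT. Qed.

Lemma vnorm_delta (j : 'I_n) : vnorm (delta_mx j ord0 : 'cV[C]_n) = 1.
Proof.
rewrite /vnorm (bigD1 j) //= big1 => [|i /negPf i_neq_j]; last first.
  by rewrite mxE i_neq_j cabs0 expr0n.
by rewrite mxE !eqxx cabs1 expr1n addr0 sqrtr1.
Qed.

Lemma cabs_le_vnorm x i : cabs (x i ord0) <= vnorm x.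
Proof.
rewrite -ler_sqr ?nnegrE ?cabs_ge0 ?vnorm_ge0 // vnorm_sqr.
by rewrite (bigD1 i) //= lerDl sumr_ge0 // => j _; exact: sqr_ge0.
Qed.

Lemma vnorm_le_sum x : vnorm x <= \sum_(i < n) cabs (x i ord0).
Proof.
have sum_ge0 : 0 <= \sum_(i < n) cabs (x i ord0) by apply: sumr_ge0 => i _; exact: cabs_ge0.
rewrite -ler_sqr ?nnegrE ?vnorm_ge0 // vnorm_sqr expr2 mulr_suml.
apply: ler_sum => i _; rewrite expr2 ler_wpM2l ?cabs_ge0 //.
by rewrite (bigD1 i) //= lerDl sumr_ge0 // => j _; exact: cabs_ge0.
Qed.

Lemma vnorm_mulmx_le_entries (M : 'M[C]_n) x :
  vnorm (M *m x) <= (\sum_(i < n) \sum_(j < n) cabs (M i j)) * vnorm x.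
Proof.
apply: le_trans (vnorm_le_sum _) _; rewrite mulr_suml; apply: ler_sum => i _.
rewrite mxE; apply: le_trans (cabs_sum _) _; rewrite mulr_suml.
by apply: ler_sum => j _; rewrite cabsM ler_wpM2l ?cabs_ge0 ?cabs_le_vnorm.
Qed.

End EuclideanNorm.

Section SpectralNorm.
Variables (R : realType) (n : nat).
Hypothesis n_gt0 : (0 < n)%N.
Local Notation C := R[i].
Implicit Types (M D : 'M[C]_n) (x v : 'cV[C]_n) (a : C).
Local Open Scope classical_set_scope.

Let e0 : 'cV[C]_n := delta_mx (Ordinal n_gt0) ord0.

Lemma has_sup_specnorm M :
  has_sup [set vnorm (M *m x) | x in [set x : 'cV[C]_n | vnorm x = 1]].
Proof.
split; first by exists (vnorm (M *m e0)), e0; rewrite //= vnorm_delta.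
exists (\sum_(i < n) \sum_(j < n) cabs (M i j)) => _ [x /= x1 <-].
by have := vnorm_mulmx_le_entries M x; rewrite x1 mulr1.
Qed.

Lemma specnorm_ub M x : vnorm x = 1 -> vnorm (M *m x) <= specnorm M.
Proof. by move=> x1; apply: sup_upper_bound (has_sup_specnorm M) _ _; exists x. Qed.

Lemma specnorm_le M k : (forall x, vnorm (M *m x) <= k * vnorm x) -> specnorm M <= k.
Proof.
move=> M_le; apply: ge_sup; first by exists (vnorm (M *m e0)), e0; rewrite //= vnorm_delta.
by move=> _ [x /= x1 <-]; rewrite -[k]mulr1 -x1.
Qed.

Lemma specnorm_ge0 M : 0 <= specnorm M.
Proof. exact: le_trans (vnorm_ge0 _) (specnorm_ub M (vnorm_delta R (Ordinal n_gt0))). Qed.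

Lemma vnorm_mulmx_le M x : vnorm (M *m x) <= specnorm M * vnorm x.
Proof.
have [->|x_neq0] := eqVneq x 0; first by rewrite mulmx0 vnorm0 mulr0.
have x_gt0 : 0 < vnorm x by rewrite vnorm_gt0.
have := specnorm_ub M (x := ((vnorm x)^-1)%:C *: x).
rewrite -scalemxAr !vnormZ cabsR ger0_norm ?invr_ge0 ?vnorm_ge0 // mulVf ?gt_eqF //.
by rewrite ler_pdivrMl // mulrC => /(_ erefl).
Qed.

Lemma specnorm_mulmx_le M D : specnorm (M *m D) <= specnorm M * specnorm D.
Proof.
apply: specnorm_le => x; rewrite -mulmxA -mulrA.
exact: le_trans (vnorm_mulmx_le _ _) (ler_wpM2l (specnorm_ge0 _) (vnorm_mulmx_le _ _)).
Qed.

Lemma cabs_eigen_le M v a : v != 0 -> M *m v = a *: v -> cabs a <= specnorm M.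
Proof.
move=> v_neq0 Mv; have := vnorm_mulmx_le M v.
by rewrite Mv vnormZ ler_pM2r ?vnorm_gt0.
Qed.

Lemma specnorm_scalar a : specnorm (a%:M : 'M[C]_n) = cabs a.
Proof.
apply/eqP; rewrite eq_le; apply/andP; split.
  by apply: specnorm_le => x; rewrite mul_scalar_mx vnormZ.
by apply: (@cabs_eigen_le _ e0); rewrite ?mul_scalar_mx // -vnorm_eq0 vnorm_delta oner_eq0.
Qed.

Lemma specnorm_exp_le M m : specnorm (M ^+ m) <= specnorm M ^+ m.
Proof.
elim: m => [|m IHm]; first by rewrite !expr0 specnorm_scalar cabs1.
rewrite !exprS -mulmxE; apply: le_trans (specnorm_mulmx_le _ _) _.
by rewrite ler_wpM2l ?specnorm_ge0.
Qed.

Lemma specnorm_singular_ge1 M D :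
  \det (1%:M + M *m D) = 0 -> 1 <= specnorm M * specnorm D.
Proof.
move=> /eqP /det0_colP [x x_neq0]; rewrite mulmxDl mul1mx -mulmxA => /eqP.
rewrite addr_eq0 => /eqP x_eq.
rewrite -(ler_pM2r (x := vnorm x)) ?vnorm_gt0 // mul1r -mulrA {1}x_eq vnormN.
exact: le_trans (vnorm_mulmx_le _ _) (ler_wpM2l (specnorm_ge0 _) (vnorm_mulmx_le _ _)).
Qed.

End SpectralNorm.

Section NormAttainingEigenvector.
Variables (R : realType) (n : nat) (M : 'M[R[i]]_n) (v : 'cV[R[i]]_n) (a : R[i]).
Variable j : 'I_n.
Hypothesis Mv : M *m v = a *: v.

Let e : 'cV[R[i]]_n := delta_mx j ord0.
Let m : 'cV[R[i]]_n := M *m e.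
Let p : R[i] := a^* * (a * (v j ord0)^* - dotc m v).

Lemma norm_gap_perturbation (t : R) :
  let x := v + (t%:C * p^*) *: e in
  (cabs a * vnorm x) ^+ 2 - vnorm (M *m x) ^+ 2
  = t * (2 + t * (cabs a ^+ 2 - vnorm m ^+ 2)) * cabs p ^+ 2.
Proof.
move=> x; apply: (@complexI R).
have -> : ((cabs a * vnorm x) ^+ 2 - vnorm (M *m x) ^+ 2)%:C
          = a * a^* * dotc x x - dotc (M *m x) (M *m x).
  by rewrite rmorphB exprMn rmorphM /= cabs_sqrC !vnorm_sqrC.
rewrite rmorphM /= cabs_sqrC rmorphM rmorphD rmorph_nat rmorphM rmorphB /=.
rewrite cabs_sqrC vnorm_sqrC /x mulmxDr -scalemxAr Mv -/m.
rewrite !(dotcDl, dotcDr, dotcZl, dotcZr) [dotc v e]dotcC [dotc v m]dotcC.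
have tJ : t%:C^* = t%:C by apply/CrealP; rewrite complex_real.
rewrite !dotc_deltal mxE !eqxx conjC1 /p !rmorphM !rmorphB /= !rmorphM /= !conjCK tJ.
ring.
Qed.

Hypotheses (n_gt0 : (0 < n)%N) (norm_a : cabs a = specnorm M).

Lemma norm_attaining_left_eigen :
  \sum_(i < n) (v i ord0)^* * M i j = a * (v j ord0)^*.
Proof.
have -> : \sum_(i < n) (v i ord0)^* * M i j = dotc m v.
  by apply: eq_bigr => i _; rewrite /m /e -colE !mxE mulrC.
have [a0|a_neq0] := eqVneq a 0.
  have := vnorm_mulmx_le n_gt0 M e; rewrite -/m -norm_a a0 cabs0 mul0r => m_le0.
  have m0 : m = 0 by apply/eqP; rewrite -vnorm_eq0 eq_le m_le0 vnorm_ge0.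
  by rewrite mul0r /dotc big1 // => i _; rewrite m0 mxE mul0r.
suff /eqP : cabs p ^+ 2 = 0.
  by rewrite sqrf_eq0 cabs_eq0 mulf_eq0 conjC_eq0 (negPf a_neq0) subr_eq0 => /eqP.
apply: (@quadratic_ge0_eq0 _ (cabs a ^+ 2 - vnorm m ^+ 2) _ (sqr_ge0 _)) => t.
rewrite -norm_gap_perturbation subr_ge0.
by rewrite ler_sqr ?nnegrE ?mulr_ge0 ?cabs_ge0 ?vnorm_ge0 // norm_a vnorm_mulmx_le.
Qed.

End NormAttainingEigenvector.

Local Open Scope classical_set_scope.

Lemma ssv_norm_attaining_eigen (R : realType) n (B : set 'M[R[i]]_n)
    (M : 'M[R[i]]_n) (v : 'cV[R[i]]_n) (a : R[i]) :
  (0 < n)%N -> (forall b : R[i], B b%:M) -> v != 0 -> M *m v = a *: v ->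
  cabs a = specnorm M -> ssv B M = specnorm M.
Proof.
move=> n_gt0 B_scalar v_neq0 Mv norm_a; rewrite /ssv /=.
set S := [set D | B D /\ \det (1%:M + M *m D) = 0].
have [a0|a_neq0] := eqVneq a 0.
  have normM0 : specnorm M = 0 by rewrite -norm_a a0 cabs0.
  rewrite normM0 asboolF // => -[D [_ /(specnorm_singular_ge1 n_gt0)]].
  by rewrite normM0 mul0r ler10.
have a_gt0 : 0 < cabs a by rewrite lt_def cabs_eq0 a_neq0 cabs_ge0.
pose D0 : 'M[R[i]]_n := (- a^-1)%:M.
have S_D0 : S D0.
  split; first exact: B_scalar.
  apply/eqP/det0_colP; exists v => //.
  rewrite mulmxDl mul1mx -mulmxA mul_scalar_mx -scalemxAr Mv scalerA.
  by rewrite mulNr mulVf // scaleN1r subrr.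
have inf_S : inf (@specnorm R n @` S) = (cabs a)^-1.
  apply/eqP; rewrite eq_le; apply/andP; split.
    rewrite -cabsV -cabsN -(specnorm_scalar n_gt0); apply: ge_inf; last by exists D0.
    by exists 0 => _ [D _ <-]; exact: specnorm_ge0.
  apply: lb_le_inf; first by exists (specnorm D0), D0.
  move=> _ [D [_ /(specnorm_singular_ge1 n_gt0)]] + <-.
  by rewrite -norm_a -[_^-1]mulr1 ler_pdivrMl.
by rewrite asboolT; [rewrite inf_S invrK | exists D0].
Qed.

Close Scope classical_set_scope.
Close Scope complex_scope.
Unset Implicit Arguments.
Set Strict Implicit.

Theorem proposition2p1 (R : realType) (n : nat) (A : 'M[R[i]]_n) (c : R[i]) :
  (0 < n)%N ->
  (forall i : 'I_n, \sum_(j < n) A i j = c) ->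
  cabs c <= specnorm A /\
  (cabs c = specnorm A ->
     (forall j : 'I_n, \sum_(i < n) A i j = c) /\
     (forall (m : nat) (ks ns : seq nat), is_block_structure n ks ns ->
        ssv (block_set ks ns) (A ^+ m) = specnorm A ^+ m)).
Proof.
move=> n_gt0 row_sum; pose ones : 'cV[R[i]]_n := const_mx 1.
have ones_neq0 : ones != 0.
  by apply/eqP => /matrixP /(_ (Ordinal n_gt0) ord0); rewrite !mxE; apply/eqP/oner_neq0.
have A_ones : A *m ones = c *: ones.
  apply/matrixP => i k; rewrite !mxE -(row_sum i) mulr1.
  by apply: eq_bigr => j _; rewrite mxE mulr1.
split; first exact: cabs_eigen_le A_ones.
move=> norm_c; split=> [j|m ks ns block_B].
  have := norm_attaining_left_eigen j A_ones n_gt0 norm_c.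
  rewrite mxE conjC1 mulr1 => <-.
  by apply: eq_bigr => i _; rewrite mxE conjC1 mul1r.
have Am_ones := mulmx_exp_eigen m A_ones.
have norm_cm : cabs (c ^+ m) = specnorm (A ^+ m).
  apply/eqP; rewrite eq_le (cabs_eigen_le n_gt0 ones_neq0 Am_ones).
  by rewrite cabsX norm_c specnorm_exp_le.
have B_scalar (b : R[i]) := block_set_scalar b block_B.
by rewrite (ssv_norm_attaining_eigen n_gt0 B_scalar ones_neq0 Am_ones norm_cm)
  -norm_cm cabsX norm_c.
Qed.
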